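(* Let $d\ge1$. Every $(d+1)$-lateration graph can be obtained from a complete graph by a finite (possibly empty) sequence of edge-reduced graph attachments.
   Context: A graph $G=(V,E)$ with $V=\{1,\dots,v\}$ is a $(d+1)$-lateration graph if the vertices $1,\dots,d+1$ form a complete graph, and each vertex $i>d+1$ is joined to exactly $d+1$ vertices of $\{1,\dots,i-1\}$ (these being all the edges). Given graphs $G_A=(V_A,E_A)$, $G_B=(V_B,E_B)$ with $V_C=V_A\cap V_B$ nonempty and a proper subset of both $V_A$ and $V_B$, their graph attachment is $(V_A\cup V_B,E_A\cup E_B)$, and their edge-reduced graph attachment is obtained from it by removing the edges $\{i,j\}$ with $i,j\in V_C$ that belong to one of the two graphs ($G_B$, say) but not to the other ($G_A$). *)

From HB Require Import structures.
From mathcomp Require Import all_boot finmap.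
Set Implicit Arguments. Unset Strict Implicit. Unset Printing Implicit Defensive.
Local Open Scope fset_scope.

Record graph := Graph { verts : {fset nat}; edges : {fset {fset nat}} }.

Definition wf_graph (G : graph) : Prop :=
  forall e, e \in edges G -> #|` e| = 2 /\ e `<=` verts G.

Definition complete_graph (V : {fset nat}) : graph :=
  Graph V [fset [fset x; y] | x in V, y in V & x != y].

Definition segment (v : nat) : {fset nat} := [fset i | i in iota 1 v].

Definition lateration_graph (d : nat) (G : graph) : Prop :=
  exists v : nat,
    (d.+1 <= v)%N /\
        verts G = segment v /\
        wf_graph G /\
        (forall i j, (1 <= i <= d.+1)%N -> (1 <= j <= d.+1)%N -> i != j ->
           [fset i; j] \in edges G) /\
        (forall i, (d.+1 < i <= v)%N ->
           #|` [fset j in segment i.-1 | [fset i; j] \in edges G] | = d.+1) /\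
        (forall e, e \in edges G ->
           (e `<=` segment d.+1) \/
           exists i j, [/\ (d.+1 < i <= v)%N, (1 <= j < i)%N & e = [fset i; j]]).

Definition edge_reduced_attachment (GA GB G : graph) : Prop :=
  let VC := verts GA `&` verts GB in
  [/\ VC != fset0, VC `<` verts GA, VC `<` verts GB,
      verts G = verts GA `|` verts GB &
      edges G = (edges GA `|` edges GB) `\`
                [fset e in edges GB | (e `<=` VC) && (e \notin edges GA)]].

Inductive obtainable : graph -> Prop :=
  | obt_base (V : {fset nat}) : obtainable (complete_graph V)
  | obt_step (G : graph) (W : {fset nat}) (G' : graph) :
      obtainable G ->
      edge_reduced_attachment G (complete_graph W) G' ->
      obtainable G'.

From HB Require Import structures.
From mathcomp Require Import all_boot finmap.

(* Write G_k for the subgraph of G induced by {1, ..., k}.  For k <= d+2 the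
   graph G_k is complete: {1, ..., d+1} is a clique and vertex d+2 has d+1
   neighbours below it, i.e. all of them.  For k >= d+2, the graph G_(k+1)
   is the edge-reduced attachment of G_k and the complete graph on k+1 and
   its backward neighbourhood N: the two vertex sets meet in N, which has
   d+1 < k elements, and the complete graph on N contributes nothing beyond
   the edges of G_k inside N.  Since G = G_v, induction on k concludes. *)

Set Implicit Arguments.
Unset Strict Implicit.
Unset Printing Implicit Defensive.

Local Open Scope fset_scope.

Lemma mem_segment v x : (x \in segment v) = (1 <= x <= v)%N.
Proof. by rewrite /segment inE mem_iota add1n ltnS. Qed.

Lemma card_segment v : #|` segment v| = v.
Proof. by rewrite /segment card_fseq undup_id ?size_iota // iota_uniq. Qed.

Lemma segment_subS k : segment k `<=` segment k.+1.
Proof. by apply/fsubsetP => x; rewrite !mem_segment => /andP [-> /leqW]. Qed.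

Lemma segmentS_neq k x : x \in segment k.+1 -> x != k.+1 -> x \in segment k.
Proof. by rewrite !mem_segment [(x <= _)%N]leq_eqVlt ltnS => /andP [-> /orP [->|]]. Qed.

Lemma notin_segmentS k : k.+1 \notin segment k.
Proof. by rewrite mem_segment ltnn andbF. Qed.

Lemma fsub2set (K : choiceType) (x y : K) (S : {fset K}) :
  ([fset x; y] `<=` S) = (x \in S) && (y \in S).
Proof. by rewrite fsubUset !fsub1set. Qed.

Lemma in_fset_sep (T : choiceType) (A : {fset T}) (P : pred T) x :
  (x \in [fset y in A | P y]) = (x \in A) && P x.
Proof. by rewrite !inE. Qed.

Lemma cardfs2P (K : choiceType) (e : {fset K}) :
  #|` e| = 2 -> exists x y, x != y /\ e = [fset x; y].
Proof.
move=> e2; have /fset0Pn [x xe] : e != fset0 by apply: contra_eq_neq e2 => ->.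
have /cardfs1P [y ey] : #|` e `\ x| == 1.
  by move: (cardfsD1 x e); rewrite xe e2 add1n => -[] <-.
have : y \in e `\ x by rewrite ey inE.
by rewrite !inE eq_sym => /andP [xy _]; exists x, y; rewrite -ey fsetD1K.
Qed.

Lemma graph_ext (G1 G2 : graph) :
  verts G1 = verts G2 -> edges G1 = edges G2 -> G1 = G2.
Proof. by case: G1; case: G2 => /= ? ? ? ? -> ->. Qed.

Lemma wf_edgeP (G : graph) e : wf_graph G -> e \in edges G ->
  exists x y, x != y /\ e = [fset x; y].
Proof. by move=> wf /wf [/cardfs2P]. Qed.

Lemma complete_graphP V e :
  reflect (exists x y, [/\ x \in V, y \in V, x != y & e = [fset x; y]])
          (e \in edges (complete_graph V)).
Proof.
apply: (iffP (imfset2P _ _ _ _ _)) => /=.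
  by move=> [x xV [y]]; rewrite !inE /= => /andP [yV xy] ->; exists x, y.
by move=> [x [y [xV yV xy ->]]]; exists x; rewrite ?inE //; exists y; rewrite ?inE ?xV ?yV.
Qed.

Lemma complete_fsetU1_edge (x : nat) (N : {fset nat}) e :
  e \in edges (complete_graph (x |` N)) -> ~~ (e `<=` N) ->
  exists2 j, j \in N & e = [fset x; j].
Proof.
case/complete_graphP => a [b [+ + ab ->]]; rewrite fsub2set !in_fset1U.
case/orP => [/eqP ea | aN]; case/orP => [/eqP eb | bN]; subst => //.
- by rewrite eqxx in ab.
- by exists b.
- by exists a; rewrite // fsetUC.
- by rewrite aN bN.
Qed.

Definition prefix_graph (G : graph) k : graph :=
  Graph (segment k) [fset e in edges G | e `<=` segment k].

Definition back_nbhd (G : graph) i : {fset nat} :=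
  [fset j in segment i.-1 | [fset i; j] \in edges G].

Lemma mem_prefix_edges G k e :
  (e \in edges (prefix_graph G k)) = (e \in edges G) && (e `<=` segment k).
Proof. exact: in_fset_sep. Qed.

Lemma mem_back_nbhd G i j :
  (j \in back_nbhd G i) = (j \in segment i.-1) && ([fset i; j] \in edges G).
Proof. exact: in_fset_sep. Qed.

Lemma back_nbhd_sub G i : back_nbhd G i `<=` segment i.-1.
Proof. by apply/fsubsetP => j; rewrite mem_back_nbhd => /andP []. Qed.

Lemma prefix_graph_id G v :
  wf_graph G -> verts G = segment v -> prefix_graph G v = G.
Proof.
move=> wf Vv; apply: graph_ext => //=; apply/fsetP => e.
rewrite in_fset_sep; apply/andP/idP => [[] // | eE]; split=> //.
by rewrite -Vv; case: (wf e eE).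
Qed.

Lemma prefix_edgeS_cases G k e : wf_graph G ->
  e \in edges G -> e `<=` segment k.+1 ->
  e `<=` segment k \/ exists2 j, j \in back_nbhd G k.+1 & e = [fset k.+1; j].
Proof.
move=> wf eE; have [x [y [xy ee]]] := wf_edgeP wf eE; subst e.
rewrite fsub2set => /andP [xk yk].
have [ex | xk1] := eqVneq x k.+1.
  right; exists y; last by rewrite ex.
  by rewrite mem_back_nbhd (segmentS_neq yk) -?ex ?eE // eq_sym.
have [ey | yk1] := eqVneq y k.+1.
  right; exists x; last by rewrite ey fsetUC.
  by rewrite mem_back_nbhd (segmentS_neq xk) -?ey // fsetUC.
by left; rewrite fsub2set (segmentS_neq xk) ?(segmentS_neq yk).
Qed.

Lemma prefix_edgesS G k (N := back_nbhd G k.+1) : wf_graph G ->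
  edges (prefix_graph G k.+1) =
    (edges (prefix_graph G k) `|` edges (complete_graph (k.+1 |` N))) `\`
    [fset e in edges (complete_graph (k.+1 |` N))
       | (e `<=` N) && (e \notin edges (prefix_graph G k))].
Proof.
move=> wf; have kN : k.+1 \notin N.
  by apply: contra (notin_segmentS k); apply/fsubsetP/back_nbhd_sub.
have lift e : e `<=` segment k -> e `<=` segment k.+1.
  by move/fsubset_trans; apply; apply: segment_subS.
apply/fsetP => e; rewrite in_fsetD in_fsetU in_fset_sep !mem_prefix_edges.
apply/andP/idP => [[eE ek1] | ].
  case: (prefix_edgeS_cases wf eE ek1) => [ek | [j jN ej]].
    by rewrite eE ek /= !andbF.
  have eW : e \in edges (complete_graph (k.+1 |` N)).
    apply/complete_graphP; exists k.+1, j; rewrite !in_fset1U eqxx jN orbT.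
    by split=> //; apply: contraNneq kN => ->.
  by rewrite eW ej fsub2set (negbTE kN) /= orbT.
case/andP => + /orP [/andP [eE ek] | eW]; first by split; last apply: lift.
rewrite eW /= negb_and negbK.
have [eN | eN] := boolP (e `<=` N).
  by move=> /andP [eE ek]; split; last apply: lift.
move=> _; have [j jN ->] := complete_fsetU1_edge eW eN.
move: jN; rewrite mem_back_nbhd => /andP [jk ->]; split=> //.
by rewrite fsub2set mem_segment ltnSn (fsubsetP (segment_subS k)).
Qed.

Section LaterationPrefixes.

Variables (d v : nat) (G : graph).
Hypothesis G_wf : wf_graph G.
Hypothesis base_clique : forall i j, (1 <= i <= d.+1)%N -> (1 <= j <= d.+1)%N ->
  i != j -> [fset i; j] \in edges G.
Hypothesis card_back_nbhd : forall i, (d.+1 < i <= v)%N ->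
  #|` back_nbhd G i| = d.+1.

Lemma back_nbhd_first : (d.+2 <= v)%N -> back_nbhd G d.+2 = segment d.+1.
Proof.
move=> dv; apply/eqP; rewrite eqEfcard back_nbhd_sub card_segment.
by rewrite card_back_nbhd ?ltnSn.
Qed.

Lemma prefix_edge k x y : (k <= d.+2)%N -> (k <= v)%N ->
  x \in segment k -> y \in segment k -> x != y -> [fset x; y] \in edges G.
Proof.
move=> kd kv; wlog xy : x y / (x < y)%N.
  move=> lt_case xk yk; rewrite neq_ltn => /orP [] ltxy.
    by apply: lt_case; rewrite ?(ltn_eqF ltxy).
  by rewrite fsetUC; apply: lt_case; rewrite ?(ltn_eqF ltxy).
rewrite !mem_segment => /andP [x1 _] /andP [y1 yk] _.
have [yd | dy] := leqP y d.+1.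
  by apply: base_clique; rewrite ?x1 ?y1 ?yd ?(ltn_eqF xy) // (leq_trans (ltnW xy)).
have ey : y = d.+2 by apply/eqP; rewrite eqn_leq dy (leq_trans yk kd).
subst y; have : x \in back_nbhd G d.+2.
  by rewrite back_nbhd_first ?(leq_trans yk kv) // mem_segment x1.
by rewrite mem_back_nbhd fsetUC => /andP [].
Qed.

Lemma prefix_complete k : (k <= d.+2)%N -> (k <= v)%N ->
  prefix_graph G k = complete_graph (segment k).
Proof.
move=> kd kv; apply: graph_ext => //=; apply/fsetP => e.
rewrite in_fset_sep; apply/andP/complete_graphP => [[eE ek] | [x [y [xk yk xy ->]]]].
  have [x [y [xy ee]]] := wf_edgeP G_wf eE.
  by move: ek; rewrite ee fsub2set => /andP [xk yk]; exists x, y.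
by rewrite fsub2set xk yk (prefix_edge kd kv).
Qed.

Lemma prefix_attachment k : (d.+2 <= k)%N -> (k < v)%N ->
  edge_reduced_attachment (prefix_graph G k)
    (complete_graph (k.+1 |` back_nbhd G k.+1)) (prefix_graph G k.+1).
Proof.
move=> dk kv; set N := back_nbhd G k.+1.
have cardN : #|` N| = d.+1 by rewrite card_back_nbhd // ltnS (ltnW dk).
have NS : N `<=` segment k := back_nbhd_sub G k.+1.
have kN : k.+1 \notin N by apply: contra (notin_segmentS k); apply/fsubsetP.
have VC : segment k `&` (k.+1 |` N) = N.
  apply/fsetP => x; rewrite in_fsetI in_fset1U.
  have [-> | _] := eqVneq x k.+1.
    by rewrite (negbTE kN) (negbTE (notin_segmentS k)).
  by rewrite /= andb_idl //; apply/fsubsetP.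
split; rewrite /= ?VC.
- by rewrite -cardfs_gt0 cardN.
- by rewrite fproperEcard NS card_segment cardN.
- by rewrite fproperE fsubsetU1 fsubUset fsub1set (negbTE kN).
- apply/fsetP => x; rewrite in_fsetU in_fset1U.
  have [-> | xk] := eqVneq x k.+1; first by rewrite orbT mem_segment ltnSn.
  rewrite /= orb_idr; last exact/fsubsetP.
  apply/idP/idP => [xs | ]; first exact: segmentS_neq xs xk.
  exact: (fsubsetP (segment_subS k)).
- exact: prefix_edgesS.
Qed.

Lemma prefix_obtainable k : (k <= v)%N -> obtainable (prefix_graph G k).
Proof.
elim: k => [|k IH] kv; first by rewrite prefix_complete //; apply: obt_base.
have [kd | dk] := leqP k.+1 d.+2; first by rewrite prefix_complete //; apply: obt_base.
by apply: obt_step (IH (ltnW kv)) _; apply: prefix_attachment.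
Qed.

End LaterationPrefixes.

(* Neither [1 <= d], [d.+1 <= v] nor the last clause of [lateration_graph]
   is needed. *)
Theorem proposition3 (d : nat) : (1 <= d)%N ->
  forall G : graph, lateration_graph d G -> obtainable G.
Proof.
move=> _ G [v [_ [Vv [wf [clique [deg _]]]]]].
by rewrite -(prefix_graph_id wf Vv); apply: (prefix_obtainable wf clique deg).
Qed.
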